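(* Let $q\ge5$, $q\not\equiv0\pmod3$. For the orbit $\mathcal O_L$ we have $P_T=V_2+1$ and $P_{1_\Gamma}=V_1$.
   Context: Let $\mathbb F_q$ be the field of order $q$ and $\mathrm{PG}(3,q)$ the projective space with points $\mathbf P(x_0,x_1,x_2,x_3)$. For $t\in\mathbb F_q$ put $P(t)=\mathbf P(t^3,t^2,t,1)$, and $P(\infty)=\mathbf P(1,0,0,0)$; the twisted cubic is $\mathcal C=\{P(t):t\in\mathbb F_q\cup\{\infty\}\}$ and $G_q$ is the group of projectivities fixing $\mathcal C$. The osculating plane at $P(t)$ is $x_0-3tx_1+3t^2x_2-t^3x_3=0$ ($t\in\mathbb F_q$) and $x_3=0$ at $P(\infty)$; these are the $\Gamma$-planes. The tangent at $P(t)$, $t\in\mathbb F_q$, is the line through $P(t)$ and $\mathbf P(3t^2,2t,1,0)$; at $P(\infty)$ it is the line through $\mathbf P(1,0,0,0),\mathbf P(0,1,0,0)$. $T$-points are points off $\mathcal C$ on a tangent; $1_\Gamma$-points are points off $\mathcal C$ lying in exactly one $\Gamma$-plane. $\ell_L$ is the line through $\mathbf P(1,0,0,1)$ and $\mathbf P(0,0,1,0)$, i.e. $\{\mathbf P(0,0,1,0)\}\cup\{\mathbf P(1,0,\beta,1):\beta\in\mathbb F_q\}$, and $\mathcal O_L$ is its $G_q$-orbit; for a point type $\mathfrak p$, $P_{\mathfrak p}$ is the number of $\mathfrak p$-points on a line of $\mathcal O_L$. For $m\in\{0,1,2,3\}$, $V_m$ is the number of $\beta\in\mathbb F_q$ such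 that $t^3-3\beta t^2-1=0$ has exactly $m$ distinct solutions $t\in\mathbb F_q$. *)

From HB Require Import structures.
From mathcomp Require Import all_boot all_order all_algebra all_field.
Set Implicit Arguments. Unset Strict Implicit. Unset Printing Implicit Defensive.
Import GRing.Theory.
Local Open Scope ring_scope.

Section TwistedCubic.
Variable F : finFieldType.

(* Vectors of F^4 (row vectors); a point of PG(3,q) is the class of a nonzero vector. *)
Definition vec := 'rV[F]_4.
Definition mkv (a b c d : F) : vec := \row_(i < 4) nth 0 [:: a; b; c; d] i.
Definition coord (k : nat) (v : vec) : F := v ord0 (inord k).

(* u and v represent the same projective point (v nonzero assumed where relevant) *)
Definition prop (u v : vec) : bool := [exists c : F, (c != 0) && (u == c *: v)].

(* canonical representative of a projective point: first nonzero coordinate is 1 *)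
Definition ppoint (v : vec) : bool :=
  [exists i : 'I_4, (v ord0 i == 1) && [forall j : 'I_4, (j < i)%N ==> (v ord0 j == 0)]].

Definition onspan (a b v : vec) : bool :=
  [exists x : F, exists y : F, v == x *: a + y *: b].

Definition Pt (t : F) : vec := mkv (t ^+ 3) (t ^+ 2) t 1.
Definition Pinf : vec := mkv 1 0 0 0.

Definition onC (v : vec) : bool := [exists t : F, prop v (Pt t)] || prop v Pinf.

Definition on_tangent (v : vec) : bool :=
  [exists t : F, onspan (Pt t) (mkv (3 * t ^+ 2) (2 * t) 1 0) v]
  || onspan (mkv 1 0 0 0) (mkv 0 1 0 0) v.
Definition Tpoint (v : vec) : bool := ~~ onC v && on_tangent v.

Definition in_Gamma_plane (t : F) (v : vec) : bool :=
  coord 0 v - 3 * t * coord 1 v + 3 * t ^+ 2 * coord 2 v - t ^+ 3 * coord 3 v == 0.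
Definition nGamma (v : vec) : nat :=
  #|[set t : F | in_Gamma_plane t v]| + nat_of_bool (coord 3 v == 0 :> F).
Definition OneGammaPoint (v : vec) : bool := ~~ onC v && (nGamma v == 1%N).

Definition inGq (A : 'M[F]_4) : bool :=
  (A \in unitmx) && [forall v : vec, onC v ==> onC (v *m A)].

Definition lL_a : vec := mkv 1 0 0 1.
Definition lL_b : vec := mkv 0 0 1 0.

(* number of points of type p on the line (l_L)A of the orbit O_L *)
Definition Pcount (p : pred vec) (A : 'M[F]_4) : nat :=
  #|[set v : vec | ppoint v && onspan (lL_a *m A) (lL_b *m A) v && p v]|.

Definition Vm (m : nat) : nat :=
  #|[set beta : F | #|[set t : F | t ^+ 3 - 3 * beta * t ^+ 2 - 1 == 0]| == m]|.

End TwistedCubic.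

From Pilot Require Import Defs.
From mathcomp Require Import all_boot all_order all_algebra all_field.
From mathcomp Require Import fingroup cyclic ring.
Set Implicit Arguments. Unset Strict Implicit. Unset Printing Implicit Defensive.
Import GRing.Theory FinRing.Theory.
Local Open Scope ring_scope.

(* Up to a scalar, every element of G_q is a product of matrices inducing the translations
   t |-> t + b, the dilations t |-> t / k and the inversion t |-> 1 / t of the parameter of C;
   each of these visibly maps points of C, tangents and osculating planes to points of C,
   tangents and osculating planes, so the point types on the line l_L A are those on l_L.
   To see the decomposition, compose A with such a product fixing P(oo) and P(0): the images
   of the P(t) must lie on the quadrics x0 x2 = x1^2 and x1 x3 = x2^2, and since a cubic in t
   vanishing at the q - 1 >= 4 nonzero elements of F is zero, the composite is diagonal.
   On l_L the points are P(0,0,1,0), a T-point in the two osculating planes at P(0) and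
   P(oo), and the P(1,0,b,1), which lies in the osculating plane at P(t) iff
   t^3 - 3 b t^2 - 1 = 0, and on a tangent iff 4 b^3 + 1 = 0, i.e. iff this cubic has a
   double root, which happens iff it has exactly two roots. *)

(* [vector] also exports a [coord]. *)
Local Notation coord := Defs.coord.

Lemma card_option_set (T : finType) (P : pred (option T)) :
  #|[set o | P o]| = (P None + #|[set x | P (Some x)]|)%N.
Proof.
rewrite (cardsD1 None) inE; congr (_ + _)%N; rewrite -[RHS](card_imset _ Some_inj).
apply: eq_card => -[x|]; rewrite !inE /=; last by apply/esym/imsetP => -[].
by apply/idP/imsetP => [Px|[y]]; [exists x; rewrite ?inE | rewrite inE => Py [->]].
Qed.

Section TwistedCubicOrbit.
Variable F : finFieldType.
Implicit Types (a b c d k t x y : F) (u v w : vec F) (o : option F) (A : 'M[F]_4).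

Lemma three_neq0 : (#|F| %% 3 != 0)%N -> (3 : F) != 0.
Proof.
move=> F3; apply/negP => /eqP char3.
have F3char : 3%N \in [pchar F] by rewrite inE /= char3 eqxx.
have : (#|F|%:R : F) = 0.
  (* Lagrange in the additive group of F. *)
  by have := expg_cardG (in_setT (1 : F)); rewrite cardsT zmodXgE.
by move/eqP; rewrite -(dvdn_pcharf F3char) /dvdn (negbTE F3).
Qed.

Lemma coord_mkv (i : nat) a b c d : (i < 4)%N ->
  coord i (mkv a b c d) = nth 0 [:: a; b; c; d] i.
Proof. by move=> lti; rewrite /coord mxE inordK. Qed.

Lemma coordZ (i : nat) c v : coord i (c *: v) = c * coord i v.
Proof. by rewrite /coord mxE. Qed.

Lemma mkv_coord v : v = mkv (coord 0 v) (coord 1 v) (coord 2 v) (coord 3 v).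
Proof.
apply/matrixP => i j; rewrite !mxE /coord (ord1 i).
by case: j => [[|[|[|[|j]]]] ltj] //=; congr (v _ _); apply: val_inj; rewrite /= inordK.
Qed.

Lemma mkv_inj a b c d a' b' c' d' :
  mkv a b c d = mkv a' b' c' d' -> [/\ a = a', b = b', c = c' & d = d'].
Proof.
move=> eq_abcd.
by split; [move: (congr1 (coord 0) eq_abcd) | move: (congr1 (coord 1) eq_abcd)
          | move: (congr1 (coord 2) eq_abcd) | move: (congr1 (coord 3) eq_abcd)];
  rewrite !coord_mkv.
Qed.

Lemma scale_mkv k a b c d : k *: mkv a b c d = mkv (k * a) (k * b) (k * c) (k * d).
Proof.
by apply/matrixP => i j; rewrite !mxE; case: j => [[|[|[|[|j]]]] ltj] //=; rewrite mulr0.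
Qed.

Lemma add_mkv a b c d a' b' c' d' :
  mkv a b c d + mkv a' b' c' d' = mkv (a + a') (b + b') (c + c') (d + d').
Proof.
by apply/matrixP => i j; rewrite !mxE; case: j => [[|[|[|[|j]]]] ltj] //=; rewrite addr0.
Qed.

Lemma mkv0 : mkv 0 0 0 0 = 0 :> vec F.
Proof. by apply/matrixP => i j; rewrite !mxE; case: j => [[|[|[|[|j]]]] ltj]. Qed.

Definition ent A (i j : nat) := A (inord i) (inord j).

Lemma mul_mkv a b c d A :
  mkv a b c d *m A = mkv (a * ent A 0 0 + b * ent A 1 0 + c * ent A 2 0 + d * ent A 3 0)
                         (a * ent A 0 1 + b * ent A 1 1 + c * ent A 2 1 + d * ent A 3 1)
                         (a * ent A 0 2 + b * ent A 1 2 + c * ent A 2 2 + d * ent A 3 2)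
                         (a * ent A 0 3 + b * ent A 1 3 + c * ent A 2 3 + d * ent A 3 3).
Proof.
apply/matrixP => i j; rewrite !mxE !big_ord_recr big_ord0 /= add0r !mxE /ent.
case: j => [[|[|[|[|j]]]] ltj] //=.
all: by congr (_ + _ + _ + _); congr (_ * _); congr (A _ _); apply: val_inj; rewrite /= ?inordK.
Qed.

Lemma mx_ext (A B : 'M[F]_4) : (forall v, v *m A = v *m B) -> A = B.
Proof. by move=> eqAB; apply/row_matrixP => i; rewrite !rowE. Qed.

Lemma mulmx_inj A : A \in unitmx -> injective (mulmx^~ A : vec F -> vec F).
Proof. by move=> unitA v w /(congr1 (mulmx^~ (invmx A))); rewrite !mulmxK. Qed.

Lemma mulmx_eq0 A v : A \in unitmx -> (v *m A == 0) = (v == 0).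
Proof.
move=> unitA; apply/eqP/eqP => [|->]; last exact: mul0mx.
by move=> vA0; apply: (mulmx_inj unitA); rewrite /= vA0 mul0mx.
Qed.

Definition mx4 (l : seq (seq F)) : 'M[F]_4 := \matrix_(i < 4, j < 4) nth 0 (nth [::] l i) j.

Lemma ent_mx4 l (i j : nat) : (i < 4)%N -> (j < 4)%N -> ent (mx4 l) i j = nth 0 (nth [::] l i) j.
Proof. by move=> lti ltj; rewrite /ent mxE !inordK. Qed.

(** * Projective points, the cubic, its tangents and osculating planes *)

Lemma propP u v : reflect (exists2 c, c != 0 & u = c *: v) (prop u v).
Proof.
apply: (iffP existsP) => [[c /andP [nzc /eqP ->]]|[c nzc ->]]; first by exists c.
by exists c; rewrite nzc eqxx.
Qed.

Lemma propxx v : prop v v.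
Proof. by apply/propP; exists 1; rewrite ?oner_neq0 ?scale1r. Qed.

Lemma propZ c u v : c != 0 -> prop (c *: u) v = prop u v.
Proof.
move=> nzc; apply/propP/propP => [[e nze]|[e nze ->]]; last first.
  by exists (c * e); rewrite ?mulf_neq0 // scalerA.
move/(congr1 (fun w => c^-1 *: w)); rewrite !scalerA mulVf // scale1r => ->.
by exists (c^-1 * e); rewrite // mulf_neq0 ?invr_eq0.
Qed.

Lemma prop_sym u v : prop u v -> prop v u.
Proof.
case/propP => c nzc ->; apply/propP; exists c^-1; first by rewrite invr_eq0.
by rewrite scalerA mulVf // scale1r.
Qed.

Lemma prop_trans u v w : prop u v -> prop v w -> prop u w.
Proof.
move=> /propP [c nzc ->] /propP [e nze ->]; apply/propP.
by exists (c * e); rewrite ?mulf_neq0 // scalerA.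
Qed.

Lemma prop_mulmx A u v : prop u v -> prop (u *m A) (v *m A).
Proof. by move=> /propP [c nzc ->]; apply/propP; exists c; rewrite // scalemxAl. Qed.

Lemma prop_mulmxK A u v : A \in unitmx -> prop (u *m A) (v *m A) -> prop u v.
Proof.
move=> unitA /propP [c nzc]; rewrite scalemxAl => /(mulmx_inj unitA) ->.
by apply/propP; exists c.
Qed.

Lemma onspanP (p q : vec F) v : reflect (exists x y, v = x *: p + y *: q) (onspan p q v).
Proof.
apply: (iffP existsP) => [[x /existsP [y /eqP ->]]|[x [y ->]]]; first by exists x, y.
by exists x; apply/existsP; exists y.
Qed.

Lemma onspanZ c (p q : vec F) v : c != 0 -> onspan p q (c *: v) = onspan p q v.
Proof.
have onspanZ_imply e w : onspan p q w -> onspan p q (e *: w).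
  by case/onspanP => x [y ->]; apply/onspanP; exists (e * x), (e * y); rewrite scalerDr !scalerA.
move=> nzc; apply/idP/idP => [/(onspanZ_imply c^-1)|]; last exact: onspanZ_imply.
by rewrite scalerA mulVf // scale1r.
Qed.

Lemma onspan_trans (p q p' q' : vec F) v :
  onspan p' q' p -> onspan p' q' q -> onspan p q v -> onspan p' q' v.
Proof.
case/onspanP => [x0 [y0 ->]] /onspanP [x1 [y1 ->]] /onspanP [x [y ->]]; apply/onspanP.
exists (x * x0 + y * x1), (x * y0 + y * y1).
by rewrite !scalerDr !scalerA !scalerDl addrACA.
Qed.

Lemma onspan_mulmx A (p q : vec F) v :
  onspan p q v -> onspan (p *m A) (q *m A) (v *m A).
Proof.
by case/onspanP => x [y ->]; apply/onspanP; exists x, y; rewrite mulmxDl -!scalemxAl.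
Qed.

Lemma onspan_unitmx A (p q : vec F) v : A \in unitmx ->
  onspan (p *m A) (q *m A) (v *m A) = onspan p q v.
Proof.
move=> unitA; apply/idP/idP => [/(onspan_mulmx (invmx A))|]; last exact: onspan_mulmx.
by rewrite !mulmxK.
Qed.

Definition cpt o : vec F := if o is Some t then Pt t else Pinf F.
Definition tdir o : vec F := if o is Some t then mkv (3 * t ^+ 2) (2 * t) 1 0 else mkv 0 1 0 0.

Definition osc_form o v : F :=
  if o is Some t then coord 0 v - 3 * t * coord 1 v + 3 * t ^+ 2 * coord 2 v - t ^+ 3 * coord 3 v
  else coord 3 v.
Arguments osc_form : simpl never.

Lemma osc_form_mkv o a b c d : osc_form o (mkv a b c d) =
  if o is Some t then a - 3 * t * b + 3 * t ^+ 2 * c - t ^+ 3 * d else d.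
Proof. by case: o => [t|]; rewrite /osc_form !coord_mkv. Qed.

Lemma osc_formZ o c v : osc_form o (c *: v) = c * osc_form o v.
Proof. by case: o => [t|]; rewrite /osc_form !coordZ //; ring. Qed.

Lemma onCE v : onC v = [exists o, prop v (cpt o)].
Proof.
apply/orP/existsP => [[/existsP [t Cv]|Cv]|[[t|] Cv]];
  [by exists (Some t) | by exists None | left | right] => //.
by apply/existsP; exists t.
Qed.

Lemma on_tangentE v : on_tangent v = [exists o, onspan (cpt o) (tdir o) v].
Proof.
apply/orP/existsP => [[/existsP [t Tv]|Tv]|[[t|] Tv]];
  [by exists (Some t) | by exists None | left | right] => //.
by apply/existsP; exists t.
Qed.

Lemma nGammaE v : nGamma v = #|[set o | osc_form o v == 0]|.
Proof. by rewrite card_option_set addnC. Qed.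

Lemma onC_scale c v : c != 0 -> onC (c *: v) = onC v.
Proof. by move=> nzc; rewrite !onCE; apply: eq_existsb => o; rewrite propZ. Qed.

Lemma on_tangent_scale c v : c != 0 -> on_tangent (c *: v) = on_tangent v.
Proof. by move=> nzc; rewrite !on_tangentE; apply: eq_existsb => o; rewrite onspanZ. Qed.

Lemma nGamma_scale c v : c != 0 -> nGamma (c *: v) = nGamma v.
Proof.
move=> nzc; rewrite !nGammaE; apply: eq_card => o.
by rewrite !inE osc_formZ mulf_eq0 (negbTE nzc).
Qed.

Lemma onC_cpt o : onC (cpt o).
Proof. by rewrite onCE; apply/existsP; exists o; apply: propxx. Qed.

Lemma Pt0 : Pt 0 = mkv 0 0 0 1 :> vec F.
Proof. by rewrite /Pt !expr0n. Qed.

Lemma prop_inf0 : ~~ prop (Pinf F) (Pt 0).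
Proof.
apply/negP => /propP [c _]; rewrite Pt0 /Pinf scale_mkv => /mkv_inj [].
by rewrite mulr0 => /eqP; rewrite oner_eq0.
Qed.

(** * Three families of matrices preserving the cubic *)

(* The matrices inducing t |-> t + b, t |-> t / k and t |-> 1 / t on the cubic. *)
Definition transl_mx b : 'M[F]_4 := mx4 [:: [:: 1; 0; 0; 0]; [:: 3 * b; 1; 0; 0];
   [:: 3 * b ^+ 2; 2 * b; 1; 0]; [:: b ^+ 3; b ^+ 2; b; 1]].
Definition dil_mx k : 'M[F]_4 := mx4 [:: [:: 1; 0; 0; 0]; [:: 0; k; 0; 0];
   [:: 0; 0; k ^+ 2; 0]; [:: 0; 0; 0; k ^+ 3]].
Definition flip_mx : 'M[F]_4 := mx4 [:: [:: 0; 0; 0; 1]; [:: 0; 0; 1; 0];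
   [:: 0; 1; 0; 0]; [:: 1; 0; 0; 0]].

Lemma mul_transl_mx a b c d k : mkv a b c d *m transl_mx k =
  mkv (a + 3 * k * b + 3 * k ^+ 2 * c + k ^+ 3 * d) (b + 2 * k * c + k ^+ 2 * d) (c + k * d) d.
Proof. by rewrite mul_mkv !ent_mx4 //=; congr mkv; ring. Qed.

Lemma mul_dil_mx a b c d k : mkv a b c d *m dil_mx k = mkv a (k * b) (k ^+ 2 * c) (k ^+ 3 * d).
Proof. by rewrite mul_mkv !ent_mx4 //=; congr mkv; ring. Qed.

Lemma mul_flip_mx a b c d : mkv a b c d *m flip_mx = mkv d c b a.
Proof. by rewrite mul_mkv !ent_mx4 //=; congr mkv; ring. Qed.

Lemma transl_mxN b : transl_mx b *m transl_mx (- b) = 1%:M.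
Proof. by apply: mx_ext => v; rewrite mulmxA mulmx1 [v]mkv_coord !mul_transl_mx; congr mkv; ring. Qed.

Lemma dil_mxV k : k != 0 -> dil_mx k *m dil_mx k^-1 = 1%:M.
Proof.
by move=> nzk; apply: mx_ext => v; rewrite mulmxA mulmx1 [v]mkv_coord !mul_dil_mx; congr mkv; field.
Qed.

Lemma flip_mxK : flip_mx *m flip_mx = 1%:M.
Proof. by apply: mx_ext => v; rewrite mulmxA mulmx1 [v]mkv_coord !mul_flip_mx. Qed.

Lemma unitmx_transl b : transl_mx b \in unitmx.
Proof. by case: (mulmx1_unit (transl_mxN b)). Qed.

Lemma unitmx_flip : flip_mx \in unitmx.
Proof. by case: (mulmx1_unit flip_mxK). Qed.

Definition preserves_cubic A := forall v,
  [/\ onC (v *m A) = onC v, on_tangent (v *m A) = on_tangent v & nGamma (v *m A) = nGamma v].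

Lemma preserves_cubic_mul A B :
  preserves_cubic A -> preserves_cubic B -> preserves_cubic (A *m B).
Proof.
move=> presA presB v; rewrite mulmxA.
by case: (presA v) => <- <- <-; case: (presB (v *m A)).
Qed.

Lemma preserves_cubic_scale c A : c != 0 -> preserves_cubic A -> preserves_cubic (c *: A).
Proof.
by move=> nzc presA v; rewrite -scalemxAr onC_scale // on_tangent_scale // nGamma_scale.
Qed.

Lemma preserves_cubic_cancel A B :
  preserves_cubic (A *m B) -> preserves_cubic B -> preserves_cubic A.
Proof.
move=> presAB presB v; case: (presAB v); case: (presB (v *m A)).
by rewrite mulmxA => -> -> -> -> -> ->.
Qed.

Definition cubic_map (G : 'M[F]_4) (s : option F -> option F) := forall o,
  [/\ prop (cpt o *m G) (cpt (s o)), onspan (cpt (s o)) (tdir (s o)) (tdir o *m G)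
    & exists2 c, c != 0 & forall v, osc_form (s o) (v *m G) = c * osc_form o v].

Section CubicMap.
Variables (G : 'M[F]_4) (s : option F -> option F).
Hypothesis mapG : cubic_map G s.

Lemma cubic_map_onC v : onC v -> onC (v *m G).
Proof.
rewrite !onCE => /existsP [o /(prop_mulmx G) Cv]; apply/existsP; exists (s o).
by case: (mapG o) => Co _ _; apply: prop_trans Cv Co.
Qed.

Lemma cubic_map_on_tangent v : on_tangent v -> on_tangent (v *m G).
Proof.
rewrite !on_tangentE => /existsP [o /(onspan_mulmx G) Tv]; apply/existsP; exists (s o).
case: (mapG o) => /propP [c _ Co] To _; apply: (onspan_trans _ To Tv).
by apply/onspanP; exists c, 0; rewrite Co scale0r addr0.
Qed.

Lemma cubic_map_nGamma v : injective s -> nGamma (v *m G) = nGamma v.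
Proof.
move=> inj_s; rewrite !nGammaE -(card_preimset _ inj_s); apply: eq_card => o.
have [_ _ [c nzc oscG]] := mapG o.
by rewrite !inE oscG mulf_eq0 (negbTE nzc).
Qed.

End CubicMap.

Lemma preserves_cubic_map G G' s s' : G *m G' = 1%:M -> injective s ->
  cubic_map G s -> cubic_map G' s' -> preserves_cubic G.
Proof.
move=> GG' inj_s mapG mapG' v; split; last exact: cubic_map_nGamma.
- apply/idP/idP => [/(cubic_map_onC mapG')|]; last exact: cubic_map_onC.
  by rewrite -mulmxA GG' mulmx1.
- apply/idP/idP => [/(cubic_map_on_tangent mapG')|]; last exact: cubic_map_on_tangent.
  by rewrite -mulmxA GG' mulmx1.
Qed.

Lemma cubic_map_mul G H s s' :
  cubic_map G s -> cubic_map H s' -> cubic_map (G *m H) (s' \o s).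
Proof.
move=> mapG mapH o; have [CG TG [c nzc oscG]] := mapG o; have [CH TH [e nze oscH]] := mapH (s o).
split=> /=.
- by rewrite mulmxA; apply: prop_trans CH; apply: prop_mulmx.
- have /propP [c' _ Cs] := CH.
  rewrite mulmxA; apply: (onspan_trans _ TH) (onspan_mulmx H TG).
  by apply/onspanP; exists c', 0; rewrite Cs scale0r addr0.
- by exists (e * c); rewrite ?mulf_neq0 // => v; rewrite mulmxA oscH oscG mulrA.
Qed.

Lemma cubic_map_prop G s o o' : cubic_map G s -> s o = o' -> prop (cpt o *m G) (cpt o').
Proof. by move=> mapG <-; case: (mapG o). Qed.

Lemma cubic_map_transl b : cubic_map (transl_mx b) (omap (fun t => t + b)).
Proof.
case=> [t|] /=; split.
- apply/propP; exists 1; first exact: oner_neq0.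
  by rewrite scale1r /Pt mul_transl_mx; congr mkv; ring.
- apply/onspanP; exists 0, 1.
  by rewrite /Pt mul_transl_mx !scale_mkv add_mkv; congr mkv; ring.
- exists 1; first exact: oner_neq0.
  by move=> v; rewrite [v]mkv_coord mul_transl_mx !osc_form_mkv; ring.
- apply/propP; exists 1; first exact: oner_neq0.
  by rewrite scale1r /Pinf mul_transl_mx; congr mkv; ring.
- apply/onspanP; exists (3 * b), 1.
  by rewrite /Pinf mul_transl_mx !scale_mkv add_mkv; congr mkv; ring.
- exists 1; first exact: oner_neq0.
  by move=> v; rewrite [v]mkv_coord mul_transl_mx !osc_form_mkv mul1r.
Qed.

Lemma cubic_map_dil k : k != 0 -> cubic_map (dil_mx k) (omap (fun t => t / k)).
Proof.
move=> nzk; case=> [t|] /=; split.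
- apply/propP; exists (k ^+ 3); first exact: expf_neq0.
  by rewrite /Pt mul_dil_mx scale_mkv; congr mkv; field.
- apply/onspanP; exists 0, (k ^+ 2).
  by rewrite /Pt mul_dil_mx !scale_mkv add_mkv; congr mkv; field.
- exists 1; first exact: oner_neq0.
  by move=> v; rewrite [v]mkv_coord mul_dil_mx !osc_form_mkv; field.
- apply/propP; exists 1; first exact: oner_neq0.
  by rewrite scale1r /Pinf mul_dil_mx; congr mkv; ring.
- apply/onspanP; exists 0, k.
  by rewrite mul_dil_mx !scale_mkv add_mkv; congr mkv; ring.
- exists (k ^+ 3); first exact: expf_neq0.
  by move=> v; rewrite [v]mkv_coord mul_dil_mx !osc_form_mkv.
Qed.

Definition pinv o : option F := if o is Some t then (if t == 0 then None else Some t^-1) else Some 0.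

Lemma pinvK : involutive pinv.
Proof.
case=> [t|] /=; last by rewrite eqxx.
by have [->|nzt] := eqVneq t 0; rewrite //= invr_eq0 (negbTE nzt) invrK.
Qed.

Lemma cubic_map_flip : cubic_map flip_mx pinv.
Proof.
case=> [t|] /=; last split.
- have [->|nzt] := eqVneq t 0; split.
  + apply/propP; exists 1; first exact: oner_neq0.
    by rewrite scale1r /Pt mul_flip_mx; congr mkv; ring.
  + apply/onspanP; exists 0, 1.
    by rewrite mul_flip_mx !scale_mkv add_mkv; congr mkv; ring.
  + exists 1; first exact: oner_neq0.
    by move=> v; rewrite [v]mkv_coord mul_flip_mx !osc_form_mkv; ring.
  + apply/propP; exists (t ^+ 3); first exact: expf_neq0.
    by rewrite /Pt mul_flip_mx scale_mkv; congr mkv; field.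
  + apply/onspanP; exists (3 * t ^+ 2), (- t).
    by rewrite /Pt mul_flip_mx !scale_mkv add_mkv; congr mkv; field.
  + exists (- t^-1 ^+ 3); first by rewrite oppr_eq0 expf_neq0 ?invr_eq0.
    by move=> v; rewrite [v]mkv_coord mul_flip_mx !osc_form_mkv; field.
- apply/propP; exists 1; first exact: oner_neq0.
  by rewrite scale1r /Pt /Pinf mul_flip_mx; congr mkv; ring.
- apply/onspanP; exists 0, 1.
  by rewrite mul_flip_mx !scale_mkv add_mkv; congr mkv; ring.
- exists 1; first exact: oner_neq0.
  by move=> v; rewrite [v]mkv_coord mul_flip_mx !osc_form_mkv; ring.
Qed.

Lemma preserves_transl b : preserves_cubic (transl_mx b).
Proof.
exact: preserves_cubic_map (transl_mxN b) (inj_omap (addIr b))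
  (cubic_map_transl b) (cubic_map_transl (- b)).
Qed.

Lemma preserves_dil k : k != 0 -> preserves_cubic (dil_mx k).
Proof.
move=> nzk; apply: preserves_cubic_map (dil_mxV nzk) (inj_omap (mulIf _))
  (cubic_map_dil nzk) (cubic_map_dil _); by rewrite invr_eq0.
Qed.

Lemma preserves_flip : preserves_cubic flip_mx.
Proof. exact: preserves_cubic_map flip_mxK (can_inj pinvK) cubic_map_flip cubic_map_flip. Qed.

Lemma transitive_inf0 o1 o2 : o1 != o2 -> exists W, [/\ W \in unitmx, preserves_cubic W,
  prop (cpt o1 *m W) (cpt None) & prop (cpt o2 *m W) (cpt (Some 0))].
Proof.
case: o1 o2 => [u|] [w|] // neq_o.
- have nz_wu : w - u != 0 by rewrite subr_eq0 eq_sym.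
  have mapW := cubic_map_mul (cubic_map_mul (cubic_map_transl (- u)) cubic_map_flip)
    (cubic_map_transl (- (w - u)^-1)).
  exists (transl_mx (- u) *m flip_mx *m transl_mx (- (w - u)^-1)); split.
  + by rewrite !unitmx_mul unitmx_flip !unitmx_transl.
  + exact: preserves_cubic_mul (preserves_cubic_mul (preserves_transl _) preserves_flip)
      (preserves_transl _).
  + by apply: (cubic_map_prop mapW); rewrite /= subrr eqxx.
  + by apply: (cubic_map_prop mapW); rewrite /= (negbTE nz_wu) /= subrr.
- have mapW := cubic_map_mul (cubic_map_transl (- u)) cubic_map_flip.
  exists (transl_mx (- u) *m flip_mx); split.
  + by rewrite unitmx_mul unitmx_flip unitmx_transl.
  + exact: preserves_cubic_mul (preserves_transl _) preserves_flip.
  + by apply: (cubic_map_prop mapW); rewrite /= subrr eqxx.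
  + exact: (cubic_map_prop mapW).
- exists (transl_mx (- w)); split.
  + exact: unitmx_transl.
  + exact: preserves_transl.
  + exact: (cubic_map_prop (cubic_map_transl _)).
  + by apply: (cubic_map_prop (cubic_map_transl _)); rewrite /= subrr.
Qed.

(** * Every element of G_q preserves the cubic *)

Lemma cubic_coef_eq0 c0 c1 c2 c3 : (5 <= #|F|)%N ->
  (forall t, t != 0 -> c0 + c1 * t + c2 * t ^+ 2 + c3 * t ^+ 3 = 0) ->
  [/\ c0 = 0, c1 = 0, c2 = 0 & c3 = 0].
Proof.
move=> F5 vanish; pose p : {poly F} := Poly [:: c0; c1; c2; c3].
have p0 : p = 0.
  apply: (@roots_geq_poly_eq0 _ p (enum (predC1 0))); last 2 first.
  - exact: enum_uniq.
  - rewrite -cardE cardC1 (leq_trans (size_Poly _)) //.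
    by case: #|F| F5 => [|[|[|[|[|n]]]]].
  apply/allP => t; rewrite mem_enum inE => nzt; rewrite /root horner_Poly /=.
  by apply/eqP; rewrite -[RHS](vanish t nzt); ring.
have := coef_Poly [:: c0; c1; c2; c3]; rewrite -/p p0 => coefp.
by split; [have := coefp 0%N | have := coefp 1%N | have := coefp 2%N | have := coefp 3%N];
  rewrite coef0.
Qed.

Lemma onC_quadrics w : onC w -> [/\ coord 0 w * coord 2 w = coord 1 w ^+ 2,
  coord 1 w * coord 3 w = coord 2 w ^+ 2 & coord 0 w * coord 3 w = coord 1 w * coord 2 w].
Proof.
rewrite onCE => /existsP [o /propP [c _ ->]]; rewrite !coordZ.
by case: o => [t|]; rewrite /= /Pt /Pinf !coord_mkv //=; split; ring.
Qed.

Section FixInfZero.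
Variables (A : 'M[F]_4) (al de : F).
Hypotheses (F5 : (5 <= #|F|)%N) (unitA : A \in unitmx) (nz_al : al != 0) (nz_de : de != 0).
Hypotheses (A_inf : Pinf F *m A = al *: Pinf F) (A_0 : Pt 0 *m A = de *: Pt 0).
Hypothesis CA : forall t, t != 0 -> onC (Pt t *m A).

Local Notation x j := (ent A 1 j).
Local Notation y j := (ent A 2 j).

Lemma mulmx_fix_inf0 a b c d : mkv a b c d *m A =
  mkv (a * al + b * x 0 + c * y 0) (b * x 1 + c * y 1) (b * x 2 + c * y 2) (b * x 3 + c * y 3 + d * de).
Proof.
move: A_inf A_0; rewrite Pt0 /Pinf !mul_mkv !scale_mkv !(mul0r, mul1r, mulr0, mulr1, addr0, add0r).
move=> /mkv_inj [a00 a01 a02 a03] /mkv_inj [a30 a31 a32 a33].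
by rewrite a00 a01 a02 a03 a30 a31 a32 a33; congr mkv; ring.
Qed.

(* Coefficients of the cubics in t expressing that the image of P(t) lies on the quadrics
   x0 x2 = x1^2 and x1 x3 = x2^2, after dividing out t^2 and t respectively. *)
Lemma quadric1_coefs : [/\ y 0 * y 2 - y 1 ^+ 2 = 0, x 0 * y 2 + y 0 * x 2 - 2 * x 1 * y 1 = 0,
  al * y 2 + x 0 * x 2 - x 1 ^+ 2 = 0 & al * x 2 = 0].
Proof.
apply: cubic_coef_eq0 => // t nzt; have [q1 _ _] := onC_quadrics (CA nzt).
move: q1; rewrite /Pt mulmx_fix_inf0 !coord_mkv //= => /eqP; rewrite -subr_eq0 => /eqP q1.
by apply: (mulfI (expf_neq0 2 nzt)); rewrite mulr0 -q1; ring.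
Qed.

Lemma quadric2_coefs : [/\ y 1 * de = 0, x 1 * de + y 1 * y 3 - y 2 ^+ 2 = 0,
  x 1 * y 3 + y 1 * x 3 - 2 * x 2 * y 2 = 0 & x 1 * x 3 - x 2 ^+ 2 = 0].
Proof.
apply: cubic_coef_eq0 => // t nzt; have [_ q2 _] := onC_quadrics (CA nzt).
move: q2; rewrite /Pt mulmx_fix_inf0 !coord_mkv //= => /eqP; rewrite -subr_eq0 => /eqP q2.
by apply: (mulfI nzt); rewrite mulr0 -q2; ring.
Qed.

Lemma fix_inf0_eq : x 1 / al != 0 /\ A = al *: dil_mx (x 1 / al).
Proof.
have [k0 k1 k2 k3] := quadric1_coefs; have [d0 d1 d2 d3] := quadric2_coefs.
have x2_0 : x 2 = 0 by apply: (mulfI nz_al); rewrite mulr0.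
have y1_0 : y 1 = 0 by apply: (mulIf nz_de); rewrite mul0r.
have nz_x1 : x 1 != 0.
  apply/negP => /eqP x1_0.
  have : mkv (x 0 / al) (-1) 0 (x 3 / de) *m A = 0.
    by rewrite mulmx_fix_inf0 x1_0 x2_0 -mkv0; congr mkv; field.
  by move/eqP; rewrite mulmx_eq0 // -mkv0 => /eqP /mkv_inj [_ /eqP]; rewrite oppr_eq0 oner_eq0.
have y2E : al * y 2 = x 1 ^+ 2 by apply: subr0_eq; rewrite -k2 x2_0; ring.
have nz_y2 : y 2 != 0.
  by apply: contraNneq (expf_neq0 2 nz_x1) => y2_0; rewrite -y2E y2_0 mulr0.
have x3_0 : x 3 = 0 by apply: (mulfI nz_x1); rewrite mulr0 -d3 x2_0; ring.
have y3_0 : y 3 = 0 by apply: (mulfI nz_x1); rewrite mulr0 -d2 x2_0 y1_0; ring.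
have x0_0 : x 0 = 0 by apply: (mulIf nz_y2); rewrite mul0r -k1 x2_0 y1_0; ring.
have y0_0 : y 0 = 0 by apply: (mulIf nz_y2); rewrite mul0r -k0 y1_0; ring.
have deE : de = y 2 ^+ 2 / x 1 by apply: (mulfI nz_x1); rewrite -[LHS]subr0 -d1 y1_0; field.
have {}y2E : y 2 = x 1 ^+ 2 / al by apply: (mulfI nz_al); rewrite y2E; field.
split; first by rewrite mulf_neq0 ?invr_eq0.
apply: mx_ext => v; rewrite [v]mkv_coord mulmx_fix_inf0 -scalemxAr mul_dil_mx scale_mkv.
rewrite x0_0 x2_0 x3_0 y0_0 y1_0 y3_0 deE y2E.
by congr mkv; field; rewrite ?nz_al ?nz_x1.
Qed.

End FixInfZero.

Lemma fix_inf0_dil A : (5 <= #|F|)%N -> A \in unitmx -> (forall t, t != 0 -> onC (Pt t *m A)) ->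
  prop (Pinf F *m A) (Pinf F) -> prop (Pt 0 *m A) (Pt 0) ->
  exists al k, [/\ al != 0, k != 0 & A = al *: dil_mx k].
Proof.
move=> F5 unitA CA /propP [al nz_al A_inf] /propP [de nz_de A_0].
have [nzk eqA] := fix_inf0_eq F5 unitA nz_al nz_de A_inf A_0 CA.
by exists al, (ent A 1 1 / al).
Qed.

Lemma inGq_preserves A : (5 <= #|F|)%N -> inGq A -> preserves_cubic A.
Proof.
move=> F5 /andP [unitA /forallP CA]; have {}CA v : onC v -> onC (v *m A) := implyP (CA v).
have [o1 A_inf] : exists o1, prop (cpt None *m A) (cpt o1).
  by apply/existsP; rewrite -onCE CA ?onC_cpt.
have [o2 A_0] : exists o2, prop (cpt (Some 0) *m A) (cpt o2).
  by apply/existsP; rewrite -onCE CA ?onC_cpt.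
have neq_o : o1 != o2.
  apply: (contraNneq _ prop_inf0) => eq_o; apply: (prop_mulmxK unitA).
  by rewrite eq_o in A_inf; exact: prop_trans A_inf (prop_sym A_0).
have [W [unitW presW W_inf W_0]] := transitive_inf0 neq_o.
have unitAW : A *m W \in unitmx by rewrite unitmx_mul unitA.
have CAW t : t != 0 -> onC (Pt t *m (A *m W)).
  by move=> _; rewrite mulmxA; case: (presW (Pt t *m A)) => -> _ _; apply/CA/(onC_cpt (Some t)).
have AW_inf : prop (Pinf F *m (A *m W)) (Pinf F).
  by rewrite mulmxA; exact: prop_trans (prop_mulmx W A_inf) W_inf.
have AW_0 : prop (Pt 0 *m (A *m W)) (Pt 0).
  by rewrite mulmxA; exact: prop_trans (prop_mulmx W A_0) W_0.
have [al [k [nz_al nz_k AW]]] := fix_inf0_dil F5 unitAW CAW AW_inf AW_0.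
apply: (preserves_cubic_cancel _ presW); rewrite AW.
exact: preserves_cubic_scale nz_al (preserves_dil nz_k).
Qed.

Lemma ord4_cases (i : 'I_4) : [\/ i = inord 0, i = inord 1, i = inord 2 | i = inord 3].
Proof.
by case: i => [[|[|[|[|i]]]] lti] //; [constructor 1|constructor 2|constructor 3|constructor 4];
  apply: val_inj; rewrite /= inordK.
Qed.

Lemma existsI4 (P : pred 'I_4) :
  [exists i, P i] = [|| P (inord 0), P (inord 1), P (inord 2) | P (inord 3)].
Proof.
apply/existsP/idP => [[i Pi]|]; first by case: (ord4_cases i) => eq_i; rewrite -eq_i Pi ?orbT.
by case/or4P => Pi; eexists; exact: Pi.
Qed.

Lemma forallI4 (P : pred 'I_4) :
  [forall i, P i] = [&& P (inord 0), P (inord 1), P (inord 2) & P (inord 3)].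
Proof.
apply/forallP/and4P => [Pi|[P0 P1 P2 P3] i]; first by split; apply: Pi.
by case: (ord4_cases i) => ->.
Qed.

Definition lead v : F :=
  if coord 0 v != 0 then coord 0 v else
  if coord 1 v != 0 then coord 1 v else
  if coord 2 v != 0 then coord 2 v else coord 3 v.

Lemma ppointE v : ppoint v = (lead v == 1).
Proof.
rewrite /ppoint existsI4 !forallI4 !inordK //= -![v ord0 (inord _)]/(coord _ v) /lead.
have [->|nz0] := eqVneq (coord 0 v) 0; rewrite ?eqxx ?andbT ?andbF /=; last by rewrite orbF.
rewrite eq_sym oner_eq0 /=.
have [->|nz1] := eqVneq (coord 1 v) 0; rewrite ?eqxx ?andbT ?andbF /=; last by rewrite orbF.
rewrite eq_sym oner_eq0 /=.
by have [->|nz2] := eqVneq (coord 2 v) 0; rewrite ?eqxx ?andbT ?andbF ?orbF //= eq_sym oner_eq0.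
Qed.

Lemma leadZ c v : c != 0 -> lead (c *: v) = c * lead v.
Proof.
move=> nzc; rewrite /lead !coordZ !mulf_eq0 (negbTE nzc) /=.
by case: ifP => _ //; case: ifP => _ //; case: ifP.
Qed.

Lemma lead_eq0 v : (lead v == 0) = (v == 0).
Proof.
apply/idP/eqP => [|->]; last by rewrite -mkv0 /lead !coord_mkv //= !eqxx.
rewrite [X in X = 0]mkv_coord -mkv0 /lead.
have [->|nz0] := eqVneq (coord 0 v) 0; last by rewrite /= (negbTE nz0).
have [->|nz1] := eqVneq (coord 1 v) 0; last by rewrite /= (negbTE nz1).
have [->|nz2] := eqVneq (coord 2 v) 0; last by rewrite /= (negbTE nz2).
by move/eqP ->.
Qed.

Lemma ppoint_neq0 v : ppoint v -> v != 0.
Proof. by rewrite ppointE -lead_eq0 => /eqP ->; apply: oner_neq0. Qed.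

Definition canon v := (lead v)^-1 *: v.

Lemma ppoint_canon v : v != 0 -> ppoint (canon v).
Proof.
move=> nzv; have nzl : lead v != 0 by rewrite lead_eq0.
by rewrite ppointE leadZ ?invr_eq0 // mulVf.
Qed.

Lemma canonK v : v != 0 -> lead v *: canon v = v.
Proof. by move=> nzv; rewrite /canon scalerA mulfV ?scale1r ?lead_eq0. Qed.

Lemma canon_id v : ppoint v -> canon v = v.
Proof. by rewrite ppointE /canon => /eqP ->; rewrite invr1 scale1r. Qed.

Lemma prop_canon u v : prop u v -> canon u = canon v.
Proof.
by case/propP => c nzc ->; rewrite /canon leadZ // scalerA invfM mulrAC mulVf ?mul1r.
Qed.

Lemma canon_prop u v : v != 0 -> canon u = canon v -> prop u v.
Proof.
move=> nzv eq_canon; have nzl : lead v != 0 by rewrite lead_eq0.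
have [u0|nzu] := eqVneq u 0.
  move: eq_canon; rewrite u0 /canon scaler0 => /esym/eqP.
  by rewrite scaler_eq0 invr_eq0 (negbTE nzl) (negbTE nzv).
apply/propP; exists (lead u / lead v); first by rewrite mulf_neq0 ?invr_eq0 ?lead_eq0.
by rewrite -{1}(canonK nzu) eq_canon /canon scalerA.
Qed.

Lemma leq_card_ppoint_mulmx A (S : pred (vec F)) : A \in unitmx ->
  (forall c v, c != 0 -> S (c *: v) = S v) ->
  (#|[set v | ppoint v && S (v *m A)]| <= #|[set v | ppoint v && S v]|)%N.
Proof.
move=> unitA SZ; rewrite -(card_in_imset (f := fun v => canon (v *m A))).
  apply/subset_leq_card/subsetP => w /imsetP [v]; rewrite !inE => /andP [Pv Sv] ->.
  have nz_vA : v *m A != 0 by rewrite mulmx_eq0 // ppoint_neq0.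
  by rewrite ppoint_canon // /canon SZ // invr_eq0 lead_eq0.
move=> v w; rewrite !inE => /andP [Pv _] /andP [Pw _] eq_vw.
rewrite -(canon_id Pv) -(canon_id Pw); apply/prop_canon/(prop_mulmxK unitA)/canon_prop => //.
by rewrite mulmx_eq0 // ppoint_neq0.
Qed.

Lemma card_ppoint_mulmx A (S : pred (vec F)) : A \in unitmx ->
  (forall c v, c != 0 -> S (c *: v) = S v) ->
  #|[set v | ppoint v && S (v *m A)]| = #|[set v | ppoint v && S v]|.
Proof.
move=> unitA SZ; apply/eqP; rewrite eqn_leq leq_card_ppoint_mulmx //=.
have SAZ c v : c != 0 -> S (c *: v *m A) = S (v *m A) by move=> nzc; rewrite -scalemxAl SZ.
have unitAV : invmx A \in unitmx by rewrite unitmx_inv.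
apply: leq_trans (leq_card_ppoint_mulmx (S := fun v => S (v *m A)) unitAV SAZ).
by apply/eq_leq/eq_card => v; rewrite !inE mulmxKV.
Qed.

(** * Points of the line l_L *)

Definition lL_pt o : vec F := if o is Some b then mkv 1 0 b 1 else mkv 0 0 1 0.

Lemma lline_inj : injective lL_pt.
Proof.
case=> [b|] [b'|] //= /mkv_inj [].
- by move=> _ _ ->.
- by move/eqP; rewrite oner_eq0.
- by move/esym/eqP; rewrite oner_eq0.
Qed.

Lemma ppoint_onspan_lL v :
  ppoint v && onspan (lL_a F) (lL_b F) v = [exists o, v == lL_pt o].
Proof.
apply/andP/existsP => [[Pv /onspanP [x [y eq_v]]]|[o /eqP ->]].
  have {}eq_v : v = mkv x 0 y x.
    by rewrite eq_v /lL_a /lL_b !scale_mkv add_mkv; congr mkv; ring.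
  have lead_v : lead v = if x != 0 then x else y.
    rewrite eq_v /lead !coord_mkv //= eqxx /=.
    by case: (eqVneq x 0) => [->|] //=; case: eqP => [->|].
  move: Pv; rewrite ppointE lead_v eq_v.
  by have [-> /= /eqP ->|nzx /= /eqP ->] := eqVneq x 0; [exists None | exists (Some y)].
split; first by rewrite ppointE /lead; case: o => [b|]; rewrite !coord_mkv //= ?oner_neq0 ?eqxx.
apply/onspanP; case: o => [b|] /=; [exists 1, b | exists 0, 1];
  by rewrite /lL_a /lL_b !scale_mkv add_mkv; congr mkv; ring.
Qed.

Lemma Pcount_lL (p : pred (vec F)) A : A \in unitmx ->
  (forall c v, c != 0 -> p (c *: v) = p v) -> (forall v, p (v *m A) = p v) ->
  Pcount p A = (p (lL_pt None) + #|[set b | p (lL_pt (Some b))]|)%N.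
Proof.
move=> unitA pZ pA; pose S w := onspan (lL_a F) (lL_b F) w && p w.
have SZ c w : c != 0 -> S (c *: w) = S w by move=> nzc; rewrite /S onspanZ ?pZ.
have unitAV : invmx A \in unitmx by rewrite unitmx_inv.
rewrite /Pcount; transitivity #|[set v | ppoint v && S (v *m invmx A)]|.
  apply: eq_card => v; rewrite !inE /S -(onspan_unitmx _ _ (v *m invmx A) unitA).
  by rewrite -(pA (v *m invmx A)) mulmxKV // andbA.
rewrite (card_ppoint_mulmx unitAV SZ) -(card_option_set (fun o => p (lL_pt o))).
rewrite -(card_imset _ lline_inj); apply: eq_card => v; rewrite !inE andbA ppoint_onspan_lL.
apply/andP/imsetP => [[/existsP [o /eqP ->] po]|[o]]; first by exists o; rewrite ?inE.
by rewrite inE => po ->; split=> //; apply/existsP; exists o.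
Qed.

Definition lcubic b t : F := t ^+ 3 - 3 * b * t ^+ 2 - 1.

Lemma lcubic_vieta b r s : r != s -> lcubic b r = 0 -> lcubic b s = 0 ->
  [/\ r * s + (r + s) * (3 * b - r - s) = 0, r * s * (3 * b - r - s) = 1
    & lcubic b (3 * b - r - s) = 0].
Proof.
move=> neq_rs fr fs.
have : forall t, lcubic b t = (t - r) * (t - s) * (t - (3 * b - r - s))
    - (r * s + (r + s) * (3 * b - r - s)) * t + (r * s * (3 * b - r - s) - 1).
  by move=> t; rewrite /lcubic; ring.
set u := 3 * b - r - s; set e1 := r * s + (r + s) * u; set e2 := r * s * u.
clearbody u e1 e2 => factor.
have e1_0 : e1 = 0.
  have : e1 * (r - s) = 0.
    by transitivity (lcubic b s - lcubic b r); [rewrite !factor; ring | rewrite fr fs subrr].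
  by move/eqP; rewrite mulf_eq0 subr_eq0 (negbTE neq_rs) orbF => /eqP.
have e2_1 : e2 = 1 by apply: subr0_eq; rewrite -fr factor e1_0; ring.
by split=> //; rewrite factor e1_0 e2_1; ring.
Qed.

Lemma lcubic_double_root b r s : (3 : F) != 0 ->
  r * s + (r + s) * r = 0 -> r * s * r = 1 -> 3 * b - r - s = r -> 4 * b ^+ 3 + 1 = 0.
Proof.
move=> nz3 e1 e2 eq_u.
have nzr : r != 0.
  by apply/eqP => r0; move: e2; rewrite r0 !mul0r => /eqP; rewrite eq_sym oner_eq0.
have rE : r = - (2 * s).
  have : r * (r + 2 * s) = 0 by rewrite -e1; ring.
  by move/eqP; rewrite mulf_eq0 (negbTE nzr) /= addr_eq0 => /eqP.
have bE : b = - s.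
  have : 3 * (b + s) = 0 by rewrite -[RHS](subrr r) -{1}eq_u rE; ring.
  by move/eqP; rewrite mulf_eq0 (negbTE nz3) /= addr_eq0 => /eqP.
transitivity (4 * b ^+ 3 + r * s * r); first by rewrite e2.
by rewrite bE rE; ring.
Qed.

(* With two distinct roots r and s, the third root 3 b - r - s must repeat one of them. *)
Lemma card_lcubic_roots2 b : (3 : F) != 0 ->
  (#|[set t | t ^+ 3 - 3 * b * t ^+ 2 - 1 == 0]| == 2%N) = (4 * b ^+ 3 + 1 == 0).
Proof.
move=> nz3; have -> : [set t | t ^+ 3 - 3 * b * t ^+ 2 - 1 == 0] = [set t | lcubic b t == 0] by [].
apply/idP/idP.
- case/cards2P => r [s [neq_rs roots]].
  have rootE t : (lcubic b t == 0) = (t \in [set r; s]) by rewrite -roots inE.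
  have fr : lcubic b r = 0 by apply/eqP; rewrite rootE set21.
  have fs : lcubic b s = 0 by apply/eqP; rewrite rootE set22.
  have [e1 e2 fu] := lcubic_vieta neq_rs fr fs.
  have : 3 * b - r - s \in [set r; s] by rewrite -rootE fu.
  rewrite !inE => /orP [] /eqP eq_u; apply/eqP; rewrite eq_u in e1 e2.
  + exact: lcubic_double_root nz3 e1 e2 eq_u.
  + apply: (lcubic_double_root (r := s) (s := r) nz3).
    * by rewrite -e1; ring.
    * by rewrite -e2; ring.
    * by rewrite -[RHS]eq_u; ring.
- move/eqP => disc.
  have nzb : b != 0.
    by apply/eqP => b0; move: disc; rewrite b0 expr0n /= mulr0 add0r => /eqP; rewrite oner_eq0.
  have -> : [set t | lcubic b t == 0] = [set 2 * b; - b].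
    apply/setP => t; rewrite !inE.
    have -> : lcubic b t = (t - 2 * b) ^+ 2 * (t + b) - (4 * b ^+ 3 + 1) by rewrite /lcubic; ring.
    by rewrite disc subr0 mulf_eq0 expf_eq0 /= !subr_eq0 addr_eq0.
  suff neq_roots : 2 * b != - b by rewrite cards2 neq_roots.
  apply: contraNneq (mulf_neq0 nz3 nzb) => eq2b.
  by apply/eqP; rewrite -(addNr b) -eq2b; ring.
Qed.

Lemma onC_lline o : ~~ onC (lL_pt o).
Proof.
apply/negP; case: o => [b|] /onC_quadrics []; rewrite /lL_pt !coord_mkv //= => _.
- by move=> _ /eqP; rewrite mulr1 mul0r oner_eq0.
- by move=> /eqP; rewrite mulr0 expr1n eq_sym oner_eq0.
Qed.

Lemma on_tangent_lline_None : on_tangent (lL_pt (None : option F)).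
Proof.
rewrite on_tangentE; apply/existsP; exists (Some 0); apply/onspanP; exists 0, 1.
by rewrite /Pt !scale_mkv add_mkv; congr mkv; ring.
Qed.

Lemma on_tangent_lline b : on_tangent (lL_pt (Some b)) = (4 * b ^+ 3 + 1 == 0).
Proof.
rewrite on_tangentE; apply/existsP/eqP => [[[t|] /onspanP [x [y]]]|disc]; rewrite /lL_pt.
- rewrite [cpt _]/= [tdir _]/= /Pt !scale_mkv add_mkv => /mkv_inj [e0 e1 e2 e3].
  have x1 : x = 1 by rewrite e3; ring.
  rewrite x1 in e0 e1 e2.
  have nzt : t != 0.
    by apply/eqP => t0; move/eqP: e0; rewrite t0 !expr0n /= !(mulr0, mul0r, addr0) oner_eq0.
  have tE : t = - (2 * y).
    have : t * (t + 2 * y) = 0 by rewrite [RHS]e1; ring.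
    by move/eqP; rewrite mulf_eq0 (negbTE nzt) /= addr_eq0 => /eqP.
  transitivity (4 * b ^+ 3 + (1 * t ^+ 3 + y * (3 * t ^+ 2))); first by rewrite -e0.
  by rewrite e2 tE; ring.
- rewrite [cpt _]/= [tdir _]/= /Pinf !scale_mkv add_mkv => /mkv_inj [_ _ _].
  by rewrite !mulr0 addr0 => /eqP; rewrite oner_eq0.
- exists (Some (2 * b)); apply/onspanP; exists 1, (- b).
  rewrite [cpt _]/= [tdir _]/= /Pt !scale_mkv add_mkv; congr mkv; try ring.
  by rewrite -[LHS]subr0 -disc; ring.
Qed.

Lemma nGamma_lline b : nGamma (lL_pt (Some b)) = #|[set t | t ^+ 3 - 3 * b * t ^+ 2 - 1 == 0]|.
Proof.
rewrite /nGamma /lL_pt coord_mkv //= oner_eq0 addn0; apply: eq_card => t.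
rewrite !inE /in_Gamma_plane !coord_mkv //= -oppr_eq0.
by congr (_ == 0); ring.
Qed.

Lemma nGamma_lline_None : (3 : F) != 0 -> nGamma (lL_pt (None : option F)) = 2%N.
Proof.
move=> nz3; rewrite /nGamma /lL_pt coord_mkv //= eqxx addn1.
have -> : [set t | in_Gamma_plane t (mkv 0 0 1 0)] = [set 0 : F].
  apply/setP => t; rewrite !inE /in_Gamma_plane !coord_mkv //=.
  have -> : 0 - 3 * t * 0 + 3 * t ^+ 2 * 1 - t ^+ 3 * 0 = 3 * t ^+ 2 by ring.
  by rewrite mulf_eq0 (negbTE nz3) expf_eq0.
by rewrite cards1.
Qed.

Lemma TpointZ c v : c != 0 -> Tpoint (c *: v) = Tpoint v.
Proof. by move=> nzc; rewrite /Tpoint onC_scale // on_tangent_scale. Qed.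

Lemma OneGammaPointZ c v : c != 0 -> OneGammaPoint (c *: v) = OneGammaPoint v.
Proof. by move=> nzc; rewrite /OneGammaPoint onC_scale // nGamma_scale. Qed.

Lemma Tpoint_mulmx A : preserves_cubic A -> forall v, Tpoint (v *m A) = Tpoint v.
Proof. by move=> presA v; case: (presA v) => CvA TvA _; rewrite /Tpoint CvA TvA. Qed.

Lemma OneGammaPoint_mulmx A :
  preserves_cubic A -> forall v, OneGammaPoint (v *m A) = OneGammaPoint v.
Proof. by move=> presA v; case: (presA v) => CvA _ GvA; rewrite /OneGammaPoint CvA GvA. Qed.

Lemma card_Tpoint_lline : (3 : F) != 0 -> #|[set b | Tpoint (lL_pt (Some b))]| = Vm F 2.
Proof.
move=> nz3; apply: eq_card => b.
by rewrite !inE /Tpoint onC_lline on_tangent_lline card_lcubic_roots2.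
Qed.

Lemma card_OneGammaPoint_lline : #|[set b | OneGammaPoint (lL_pt (Some b))]| = Vm F 1.
Proof. by apply: eq_card => b; rewrite !inE /OneGammaPoint onC_lline nGamma_lline. Qed.

End TwistedCubicOrbit.

Theorem lemma4p3 (F : finFieldType) :
  (5 <= #|F|)%N -> (#|F| %% 3 != 0)%N ->
  forall A : 'M[F]_4, inGq A ->
    Pcount (@Tpoint F) A = (Vm F 2 + 1)%N /\ Pcount (@OneGammaPoint F) A = Vm F 1.
Proof.
move=> F5 F3 A GqA; have nz3 := three_neq0 F3.
have unitA : A \in unitmx by case/andP: GqA.
have presA := inGq_preserves F5 GqA.
split.
- rewrite (Pcount_lL unitA (@TpointZ F) (Tpoint_mulmx presA)) card_Tpoint_lline //.
  by rewrite /Tpoint onC_lline on_tangent_lline_None addnC.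
- rewrite (Pcount_lL unitA (@OneGammaPointZ F) (OneGammaPoint_mulmx presA)).
  by rewrite card_OneGammaPoint_lline /OneGammaPoint onC_lline nGamma_lline_None.
Qed.
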